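(* Let $U$ be as in the context and let $\mathcal{N}_U(\mathbb{N}_1)=\{x\in\mathbb{R}_1: U^k(x)\notin\mathbb{N}_1 \text{ for all } k\in\mathbb{N}_0\}$. Suppose that for every $n\in\mathbb{N}_1$ and every real $\rho>0$ there exists $z\in(n,n+\rho)\cap\mathcal{N}_U(\mathbb{N}_1)$ such that $\mathcal{T}_U(z)\to\{1,2\}$. Then the only $U$-cycle is $(1,2,1,2,\dots)$; that is, if $x\in\mathbb{R}_1$ and $U^k(x)=x$ for some $k\ge1$, then $x\in\{1,2\}$.
   Context: $\mathbb{R}_1=\{x\ge1\}$, $\mathbb{N}_0=\{0,1,2,\dots\}$, $\mathbb{N}_1=\{1,2,\dots\}$. $U:\mathbb{R}_1\to\mathbb{R}_1$: $U(x)=x/2$ if $\lfloor x\rfloor$ is even, $U(x)=(3x+1)/2$ if $\lfloor x\rfloor$ is odd; $U^i$ is the $i$-th iterate and $\mathcal T_U(x)=(U^i(x))_{i\ge0}$. The notation $\mathcal T_U(x)\to\{1,2\}$ means $\{\lim_{k\to\infty}U^{2k}(x),\lim_{k\to\infty}U^{2k+1}(x)\}=\{1,2\}$ (both limits existing). A $U$-cycle is the trajectory of a point $z$ with $U^n(z)=z$ for some $n\ge1$. *)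

From Stdlib Require Import Reals ZArith.
Open Scope R_scope.

(* floor of a real: Int_part x = floor x (Stdlib: up x - 1). *)
Definition U (x : R) : R :=
  if Z.even (Int_part x) then x / 2 else (3 * x + 1) / 2.

Fixpoint Uiter (i : nat) (x : R) : R :=
  match i with
  | O => x
  | S i' => U (Uiter i' x)
  end.

Definition inN1 (y : R) : Prop := exists m : nat, (1 <= m)%nat /\ y = INR m.

Definition NU_N1 (x : R) : Prop := 1 <= x /\ forall k : nat, ~ inN1 (Uiter k x).

(* T_U(x) -> {1,2}: both limits of even/odd subsequences exist and form {1,2} *)
Definition traj_to_12 (x : R) : Prop :=
  exists a b : R,
    Un_cv (fun k => Uiter (2 * k) x) a /\
    Un_cv (fun k => Uiter (2 * k + 1) x) b /\
    ((a = 1 /\ b = 2) \/ (a = 2 /\ b = 1)).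

From Stdlib Require Import Reals ZArith Lia Lra.
Open Scope R_scope.

(* On each interval [m, m+1) the map U is affine, with slope 1/2 or 3/2, and
   U y >= slope(y) * y with equality only for slope 1/2.  Along a cycle of
   length k the product lambda of the slopes therefore satisfies
   lambda * x <= x, and lambda < 1.  Since U contracts fractional parts by at
   most its slope, frac x <= lambda * frac x, so the whole cycle consists of
   integers, and then U^k maps [x, x + 2^-k) affinely by y |-> x + lambda (y - x).
   A point z of this interval given by the hypothesis has U^(qk) z --> x, while
   its even iterates converge to 1 or 2; hence x is 1 or 2. *)

Definition slope (y : R) : R := if Z.even (Int_part y) then / 2 else 3 / 2.

(* The right derivative of U^i at x. *)
Fixpoint Uiter_slope (x : R) (i : nat) : R :=
  match i with
  | O => 1
  | S i => Uiter_slope x i * slope (Uiter i x)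
  end.

Lemma slope_bounds y : / 2 <= slope y <= 3 / 2.
Proof. unfold slope; destruct (Z.even (Int_part y)); lra. Qed.

Lemma slope_mul_le_U y : slope y * y <= U y.
Proof. unfold U, slope; destruct (Z.even (Int_part y)); lra. Qed.

Lemma U_eq_slope_mul y : U y = slope y * y -> slope y = / 2.
Proof. unfold U, slope; destruct (Z.even (Int_part y)); lra. Qed.

Lemma Int_part_IZR_add m e : 0 <= e < 1 -> Int_part (IZR m + e) = m.
Proof.
  intros He. symmetry. exact (proj1 (Int_part_frac_part_spec _ _ _ He eq_refl)).
Qed.

Lemma Int_part_IZR m : Int_part (IZR m) = m.
Proof. rewrite <- (Rplus_0_r (IZR m)). apply Int_part_IZR_add; lra. Qed.

Lemma slope_IZR_Int_part y : slope (IZR (Int_part y)) = slope y.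
Proof. unfold slope. now rewrite Int_part_IZR. Qed.

Lemma U_IZR_add m e : 0 <= e < 1 -> U (IZR m + e) = U (IZR m) + slope (IZR m) * e.
Proof.
  intros He. unfold U, slope.
  rewrite Int_part_IZR_add, Int_part_IZR by exact He.
  destruct (Z.even m); field.
Qed.

Lemma U_IZR_integer m : exists n, U (IZR m) = IZR n.
Proof.
  unfold U. rewrite Int_part_IZR.
  destruct (Z.even m) eqn:Hm.
  - apply Z.even_spec in Hm as [q ->]. exists q. rewrite mult_IZR. field.
  - assert (Hodd : Z.odd m = true) by (rewrite <- Z.negb_even, Hm; reflexivity).
    apply Z.odd_spec in Hodd as [q ->]. exists (3 * q + 2)%Z.
    rewrite !plus_IZR, !mult_IZR. field.
Qed.

Lemma frac_part_IZR_add_le n t : 0 <= t -> frac_part (IZR n + t) <= t.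
Proof.
  intros Ht. unfold frac_part.
  destruct (base_Int_part (IZR n + t)) as [Hle Hgt].
  assert (Hn : (n <= Int_part (IZR n + t))%Z).
  { apply Z.lt_succ_r, lt_IZR. rewrite succ_IZR. lra. }
  apply IZR_le in Hn. lra.
Qed.

Lemma frac_part_U_le y : frac_part (U y) <= slope y * frac_part y.
Proof.
  destruct (base_fp y) as [Hf0 Hf1].
  rewrite (Rplus_Int_part_frac_part y) at 1.
  rewrite U_IZR_add by lra.
  destruct (U_IZR_integer (Int_part y)) as [n ->].
  rewrite slope_IZR_Int_part.
  apply frac_part_IZR_add_le.
  pose proof (slope_bounds y). nra.
Qed.

Lemma Uiter_add i j y : Uiter (i + j) y = Uiter i (Uiter j y).
Proof. induction i as [|i IH]; simpl; congruence. Qed.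

Lemma Uiter_slope_bounds x i : 0 < Uiter_slope x i <= 2 ^ i.
Proof.
  induction i as [|i IH]; simpl; [lra|].
  pose proof (slope_bounds (Uiter i x)). nra.
Qed.

Lemma Uiter_slope_mul_le x i :
  Uiter_slope x i * x <= Uiter i x /\
  (Uiter_slope x i * x = Uiter i x -> Uiter_slope x i = (/ 2) ^ i).
Proof.
  induction i as [|i [IHle IHeq]]; simpl; [lra|].
  set (y := Uiter i x) in *; set (l := Uiter_slope x i) in *.
  pose proof (slope_bounds y) as Hs.
  pose proof (slope_mul_le_U y) as HU.
  split; [nra|].
  intros Heq.
  assert (Hly : l * x = y) by nra.
  assert (HUy : U y = slope y * y) by nra.
  rewrite (IHeq Hly), (U_eq_slope_mul y HUy). ring.
Qed.

Lemma frac_part_Uiter_le x i : frac_part (Uiter i x) <= Uiter_slope x i * frac_part x.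
Proof.
  induction i as [|i IH]; simpl; [lra|].
  pose proof (frac_part_U_le (Uiter i x)).
  pose proof (slope_bounds (Uiter i x)). nra.
Qed.

Section Cycle.

Variables (x : R) (k : nat).
Hypotheses (Hx : 0 < x) (Hk : (1 <= k)%nat) (Hcycle : Uiter k x = x).

Lemma cycle_slope_lt_1 : Uiter_slope x k < 1.
Proof.
  destruct (Uiter_slope_mul_le x k) as [Hle Heq]. rewrite Hcycle in Hle, Heq.
  destruct (Rle_lt_or_eq_dec _ _ Hle) as [Hlt | Hxeq].
  - nra.
  - rewrite (Heq Hxeq). apply pow_lt_1_compat; [lra | lia].
Qed.

Lemma cycle_frac_part_0 i : frac_part (Uiter i x) = 0.
Proof.
  pose proof cycle_slope_lt_1 as Hl1.
  pose proof (Uiter_slope_bounds x k) as Hl0.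
  assert (Hfx : frac_part x = 0).
  { pose proof (frac_part_Uiter_le x k) as Hf. rewrite Hcycle in Hf.
    destruct (base_fp x). nra. }
  pose proof (frac_part_Uiter_le x i) as Hfi. rewrite Hfx, Rmult_0_r in Hfi.
  destruct (base_fp (Uiter i x)). lra.
Qed.

(* Integrality of the orbit keeps each U^j (x + e) on the same unit interval
   as U^j x, where U is affine. *)
Lemma Uiter_right_affine i e :
  0 <= e -> 2 ^ i * e < 1 -> Uiter i (x + e) = Uiter i x + Uiter_slope x i * e.
Proof.
  revert e; induction i as [|i IH]; intros e He0 He1; simpl; [ring|].
  simpl in He1.
  pose proof (Uiter_slope_bounds x i).
  pose proof (pow_lt 2 i ltac:(lra)).
  rewrite IH by nra.
  pose proof (cycle_frac_part_0 i) as Hfrac.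
  pose proof (Rplus_Int_part_frac_part (Uiter i x)) as Hint.
  rewrite Hfrac, Rplus_0_r in Hint.
  rewrite Hint, U_IZR_add, <- Hint by nra.
  ring.
Qed.

Lemma cycle_iter_right q e :
  0 <= e -> 2 ^ k * e < 1 -> Uiter (q * k) (x + e) = x + Uiter_slope x k ^ q * e.
Proof.
  intros He0 He1.
  pose proof cycle_slope_lt_1. pose proof (Uiter_slope_bounds x k).
  induction q as [|q IH]; simpl; [ring|].
  assert (Hpow : 0 <= Uiter_slope x k ^ q <= 1).
  { split; [apply pow_le; lra|].
    rewrite <- (pow1 q). apply pow_incr. lra. }
  assert (Hshrink : Uiter_slope x k ^ q * e <= e) by nra.
  rewrite Uiter_add, IH, Uiter_right_affine, Hcycle by nra.
  ring.
Qed.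

Lemma cycle_attracts_right z :
  x <= z -> 2 ^ k * (z - x) < 1 -> Un_cv (fun q => Uiter (q * k) z) x.
Proof.
  intros Hz0 Hz1 eps Heps.
  pose proof cycle_slope_lt_1. pose proof (Uiter_slope_bounds x k).
  destruct (pow_lt_1_zero (Uiter_slope x k) ltac:(rewrite Rabs_right; lra)
              (eps / (z - x + 1)) ltac:(apply Rdiv_lt_0_compat; lra)) as [N HN].
  exists N. intros q Hq. specialize (HN q Hq).
  replace z with (x + (z - x)) by ring.
  rewrite cycle_iter_right by lra.
  unfold R_dist. rewrite Rplus_minus_l, Rabs_mult, (Rabs_right (z - x)) by lra.
  apply (Rmult_lt_compat_r (z - x + 1)) in HN; [|lra].
  unfold Rdiv in HN. rewrite Rmult_assoc, Rinv_l, Rmult_1_r in HN by lra.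
  pose proof (Rabs_pos (Uiter_slope x k ^ q)). nra.
Qed.

End Cycle.

Lemma Un_cv_subseq u l (phi : nat -> nat) :
  (forall q, (q <= phi q)%nat) -> Un_cv u l -> Un_cv (fun q => u (phi q)) l.
Proof.
  intros Hphi Hu eps Heps. destruct (Hu eps Heps) as [N HN].
  exists N. intros q Hq. apply HN. specialize (Hphi q). lia.
Qed.

Theorem mainTheorem5 :
  (forall (n : nat) (rho : R), (1 <= n)%nat -> 0 < rho ->
     exists z : R, INR n < z /\ z < INR n + rho /\ NU_N1 z /\ traj_to_12 z) ->
  forall x : R, 1 <= x ->
    (exists k : nat, (1 <= k)%nat /\ Uiter k x = x) ->
    x = 1 \/ x = 2.
Proof.
  intros Hdense x Hx [k [Hk Hcycle]].
  destruct (fp_nat x (cycle_frac_part_0 x k ltac:(lra) Hk Hcycle 0)) as [m Hm].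
  assert (Hm1 : (1 <= m)%Z) by (apply le_IZR; lra).
  pose proof (pow_lt 2 k ltac:(lra)) as H2k.
  destruct (Hdense (Z.to_nat m) (/ 2 ^ k)) as (z & Hxz & Hzx & _ & a & b & Ha & _ & Hab).
  { lia. }
  { now apply Rinv_0_lt_compat. }
  rewrite INR_IZR_INZ, Z2Nat.id, <- Hm in Hxz, Hzx by lia.
  assert (Hshort : 2 ^ k * (z - x) < 1).
  { apply (Rmult_lt_compat_l (2 ^ k)) in Hzx; [|lra].
    rewrite Rmult_plus_distr_l, Rinv_r in Hzx; lra. }
  assert (Hto_x : Un_cv (fun q => Uiter (2 * q * k) z) x).
  { apply (Un_cv_subseq (fun q => Uiter (q * k) z) x (fun q => 2 * q)%nat); [lia|].
    apply (cycle_attracts_right x k); auto; lra. }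
  assert (Hto_a : Un_cv (fun q => Uiter (2 * q * k) z) a).
  { apply (Un_cv_ext (fun q => Uiter (2 * (q * k)) z)).
    - intros q. now rewrite Nat.mul_assoc.
    - apply (Un_cv_subseq (fun q => Uiter (2 * q) z) a (fun q => q * k)%nat); [nia|exact Ha]. }
  rewrite (UL_sequence _ _ _ Hto_x Hto_a). lra.
Qed.
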